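(* Let $\alpha\ge4$ and $B>1$. Let $\mathcal{F}=A_n\circ\cdots\circ A_0$ be a deep learning model in which every block $A_i$ is a basic block, i.e. one of: a linear block $A(\mathbf{x})=\mathbf{A}\mathbf{x}+\mathbf{b}$ (approximation $A^\alpha=A$); a ReLU block (coordinatewise $\max(x,0)$, approximated by applying $\tilde r_{\alpha,B}$ coordinatewise); a max-pooling block with kernel size $k_0\le10$ (each output coordinate is the max of a window of $k_0^2$ inputs, approximated by applying $\tilde M_{\alpha,k_0^2,B}$ to each window); or a softmax block $A(\mathbf{x})=(\exp(x_i)/\sum_j\exp(x_j))_i$ (approximation $A^\alpha=A$). Let $\mathcal{F}^\alpha=A_n^\alpha\circ\cdots\circ A_0^\alpha$. Assume that for every input $\mathbf{x}$ considered, $\|\mathbf{x}\|_\infty\le B$ and $\|A_i\circ\cdots\circ A_0(\mathbf{x})\|_\infty\le B$, $\|A_i^\alpha\circ\cdots\circ A_0^\alpha(\mathbf{x})\|_\infty\le B$ for $0\le i\le n-1$. Then there exists a constant $C$, which can be determined independently of $\alpha$, such that $\|\mathcal{F}^\alpha(\mathbf{x})-\mathcal{F}(\mathbf{x})\|_\infty\le C2^{-\alpha}$ for every such input $\mathbf{x}$.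
   Context: Let $p_\alpha$ be a polynomial such that $m_\alpha(a,b)=\frac{(a+b)+(a-b)p_\alpha(a-b)}{2}$ satisfies $|m_\alpha(a,b)-\max(a,b)|\le2^{-\alpha}$ for all $a,b\in[0,1]$. Define $r_\alpha(x)=\frac{x+xp_\alpha(x)}{2}$ and $\tilde r_{\alpha,B}(x)=B\,r_\alpha(x/B)$. Define $M_{\alpha,1}(x_1)=x_1$, $M_{\alpha,2k}(x_1,\dots,x_{2k})=m_\alpha(M_{\alpha,k}(x_1,\dots,x_k),M_{\alpha,k}(x_{k+1},\dots,x_{2k}))$, $M_{\alpha,2k+1}(x_1,\dots,x_{2k+1})=m_\alpha(M_{\alpha,k}(x_1,\dots,x_k),M_{\alpha,k+1}(x_{k+1},\dots,x_{2k+1}))$, and $\tilde M_{\alpha,n,B}(x_1,\dots,x_n)=B'\big(M_{\alpha,n}(\tfrac{x_1}{B'}+0.5,\dots,\tfrac{x_n}{B'}+0.5)-0.5\big)$ with $B'=B/(0.5-(\lceil\log_2 n\rceil-1)2^{-\alpha})$. The constant $C$ may depend on the model parameters (the matrices of the linear blocks, kernel sizes) and on $B$, but not on $\alpha$. *)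

From HB Require Import structures.
From mathcomp Require Import all_boot all_order all_algebra.
From mathcomp Require Import reals.
From mathcomp Require Import sequences exp.
Set Implicit Arguments. Unset Strict Implicit. Unset Printing Implicit Defensive.
Import Order.TTheory GRing.Theory Num.Theory.
Local Open Scope ring_scope.

Definition supnorm (R : realType) (n : nat) (x : 'cV[R]_n) : R :=
  \big[Num.max/0]_(i < n) `|x i 0|.

(* Basic blocks A : R^m -> R^n.
   Max pooling with kernel size k0 (1 <= k0 <= 10): output coordinate j is the
   max of the window (x (w j t))_{t < k0^2}, listed in the order given by t. *)
Inductive block (R : realType) : nat -> nat -> Type :=
| BLinear (m n : nat) (A : 'M[R]_(n, m)) (b : 'cV[R]_n) : block R m n
| BReLU (n : nat) : block R n n
| BMaxPool (m n k0 : nat) (hk : (0 < k0 <= 10)%N)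
           (w : 'I_n -> 'I_(k0 ^ 2) -> 'I_m) : block R m n
| BSoftmax (n : nat) : block R n n.

Inductive model (R : realType) : nat -> nat -> Type :=
| MBlock (m n : nat) (b : block R m n) : model R m n
| MComp (m k n : nat) (A : block R k n) (F : model R m k) : model R m n.

Definition maxseq (R : realType) (s : seq R) : R := foldr Num.max (head 0 s) s.

Definition window (R : realType) (m n k0 : nat) (w : 'I_n -> 'I_(k0 ^ 2) -> 'I_m)
  (x : 'cV[R]_m) (j : 'I_n) : seq R :=
  [seq x (w j t) 0 | t <- enum 'I_(k0 ^ 2)].

Definition softmax (R : realType) (n : nat) (x : 'cV[R]_n) : 'cV[R]_n :=
  \col_i (expR (x i 0) / \sum_(j < n) expR (x j 0)).

Definition block_eval (R : realType) (m n : nat) (A : block R m n) :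
  'cV[R]_m -> 'cV[R]_n :=
  match A in block _ m n return 'cV[R]_m -> 'cV[R]_n with
  | BLinear _ _ M b => fun x => M *m x + b
  | BReLU _ => fun x => \col_i Num.max (x i 0) 0
  | BMaxPool _ _ _ _ w => fun x => \col_j maxseq (window w x j)
  | BSoftmax _ => fun x => softmax x
  end.

Definition malpha (R : realType) (p : {poly R}) (a b : R) : R :=
  ((a + b) + (a - b) * p.[a - b]) / 2.

Definition ralpha (R : realType) (p : {poly R}) (x : R) : R := (x + x * p.[x]) / 2.
Definition rtilde (R : realType) (p : {poly R}) (B x : R) : R := B * ralpha p (x / B).

Fixpoint Mrec (R : realType) (p : {poly R}) (fuel : nat) (s : seq R) : R :=
  match fuel with
  | 0 => head 0 s
  | fuel'.+1 =>
      if (size s <= 1)%N then head 0 s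
      else malpha p (Mrec p fuel' (take (size s)./2 s))
                    (Mrec p fuel' (drop (size s)./2 s))
  end.
Definition Mtree (R : realType) (p : {poly R}) (s : seq R) : R := Mrec p (size s) s.

(* B' = B / (0.5 - (ceil(log2 n) - 1) 2^-alpha); up_log 2 n = ceil(log2 n) *)
Definition Bprime (R : realType) (alpha n : nat) (B : R) : R :=
  B / (2^-1 - ((up_log 2 n)%:R - 1) * 2 ^- alpha).

Definition Mtilde (R : realType) (p : {poly R}) (alpha : nat) (B : R) (s : seq R) : R :=
  let B' := Bprime alpha (size s) B in
  B' * (Mtree p [seq y / B' + 2^-1 | y <- s] - 2^-1).

Definition block_approx (R : realType) (p : nat -> {poly R}) (alpha : nat) (B : R)
  (m n : nat) (A : block R m n) : 'cV[R]_m -> 'cV[R]_n :=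
  match A in block _ m n return 'cV[R]_m -> 'cV[R]_n with
  | BLinear _ _ M b => fun x => M *m x + b
  | BReLU _ => fun x => \col_i rtilde (p alpha) B (x i 0)
  | BMaxPool _ _ _ _ w => fun x => \col_j Mtilde (p alpha) alpha B (window w x j)
  | BSoftmax _ => fun x => softmax x
  end.

Fixpoint model_eval (R : realType) (ev : forall m n, block R m n -> 'cV[R]_m -> 'cV[R]_n)
  (m n : nat) (F : model R m n) : 'cV[R]_m -> 'cV[R]_n :=
  match F in model _ m n return 'cV[R]_m -> 'cV[R]_n with
  | MBlock _ _ b => ev _ _ b
  | MComp _ _ _ A F' => fun x => ev _ _ A (model_eval ev F' x)
  end.

Fixpoint inner_bounded (R : realType) (ev : forall m n, block R m n -> 'cV[R]_m -> 'cV[R]_n)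
  (B : R) (m n : nat) (F : model R m n) : 'cV[R]_m -> Prop :=
  match F in model _ m n return 'cV[R]_m -> Prop with
  | MBlock _ _ _ => fun _ => True
  | MComp _ _ _ _ F' => fun x =>
      inner_bounded ev B F' x /\ supnorm (model_eval ev F' x) <= B
  end.

From HB Require Import structures.
From mathcomp Require Import all_boot all_order all_algebra.
From mathcomp Require Import reals.
From mathcomp Require Import sequences exp.
From mathcomp Require Import ring lra zify.
Set Implicit Arguments. Unset Strict Implicit.
Import Order.TTheory GRing.Theory Num.Theory.
Local Open Scope ring_scope.

(* Errors propagate block by block: every approximate block, evaluated at a
   point y of the B-ball, is within c 2^-alpha + L |y - x| of the exact block
   at x, so by induction on the model the total error is C 2^-alpha.  Linear
   and softmax blocks are exact and Lipschitz on the ball.  For ReLU,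
   r_alpha(t) = m_alpha(t, 0), which is 2^-alpha-close to max(t, 0).  For max
   pooling, the balanced tree of m_alpha's loses 2^-alpha per level as long as
   all its arguments stay in [0, 1]; the rescaling by B' places the inputs in
   [(D-1) 2^-alpha, 1 - (D-1) 2^-alpha] for a tree of depth D <= 7, which is
   exactly the margin that keeps every intermediate value in [0, 1]. *)

Section MaxSeq.
Variable R : realType.
Implicit Types (a b c d e : R) (s : seq R).

Lemma ler_dist_max a b c d e :
  `|a - c| <= e -> `|b - d| <= e -> `|Num.max a b - Num.max c d| <= e.
Proof.
rewrite !ler_norml => /andP[? ?] /andP[? ?].
by case: (leP a b); case: (leP c d) => *; apply/andP; split; lra.
Qed.

Lemma maxseq_cons a s : maxseq (a :: s) = foldr Num.max a s.
Proof.
rewrite /maxseq /= max_r //.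
by elim: s => [|b s IHs] //=; rewrite le_max IHs orbT.
Qed.

Lemma maxseq_mem s : s != [::] -> maxseq s \in s.
Proof.
case: s => [//|a s] _; rewrite maxseq_cons.
elim: s => [|b s IHs] /=; first by rewrite mem_seq1.
case: (leP b (foldr Num.max a s)) => _; last by rewrite !inE eqxx orbT.
by move: IHs; rewrite !inE => /orP[->|->]; rewrite ?orbT.
Qed.

Lemma maxseq_ub s b : b \in s -> b <= maxseq s.
Proof.
case: s => [//|a s]; rewrite maxseq_cons.
elim: s b => [|c s IHs] b /=; first by rewrite mem_seq1 => /eqP->.
rewrite le_max !inE => /or3P[/eqP->|/eqP->|bs]; rewrite ?lexx //.
  by rewrite IHs ?orbT ?mem_head.
by rewrite IHs ?orbT // inE bs orbT.
Qed.

Lemma maxseq_eq s b : b \in s -> {in s, forall c, c <= b} -> maxseq s = b.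
Proof.
move=> bs ub; apply/eqP; rewrite eq_le maxseq_ub // andbT ub //.
by apply: maxseq_mem; case: (s) bs.
Qed.

Lemma maxseq_cat s1 s2 : s1 != [::] -> s2 != [::] ->
  maxseq (s1 ++ s2) = Num.max (maxseq s1) (maxseq s2).
Proof.
move=> n1 n2; apply: maxseq_eq.
  by case: (leP (maxseq s1) (maxseq s2)) => _;
    rewrite mem_cat maxseq_mem ?orbT.
by move=> c; rewrite mem_cat le_max => /orP[] /maxseq_ub ->; rewrite ?orbT.
Qed.

Lemma maxseq_map_nondecr (f : R -> R) s : s != [::] ->
  {homo f : a b / a <= b} -> maxseq (map f s) = f (maxseq s).
Proof.
move=> sn f_mono; apply: maxseq_eq; first by rewrite map_f ?maxseq_mem.
by move=> _ /mapP[c cs ->]; rewrite f_mono ?maxseq_ub.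
Qed.

Lemma maxseq_dist_map (T : eqType) (r : seq T) (f g : T -> R) e : 0 <= e ->
  {in r, forall t, `|f t - g t| <= e} ->
  `|maxseq (map f r) - maxseq (map g r)| <= e.
Proof.
case: r => [|t0 r] e0 fg; first by rewrite /maxseq subrr normr0.
have /mapP[t1 t1r f1] := @maxseq_mem (map f (t0 :: r)) isT.
have /mapP[t2 t2r g2] := @maxseq_mem (map g (t0 :: r)) isT.
have := maxseq_ub (map_f f t2r); have := maxseq_ub (map_f g t1r).
rewrite f1 g2; move: (fg _ t1r) (fg _ t2r).
by rewrite !ler_norml => /andP[? ?] /andP[? ?] ? ?; apply/andP; split; lra.
Qed.

End MaxSeq.

Section TreeMax.
Variables (R : realType) (p : {poly R}) (e : R).
Hypothesis malpha_err : forall a b : R, 0 <= a <= 1 -> 0 <= b <= 1 ->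
  `|malpha p a b - Num.max a b| <= e.

Lemma Mrec_size_le1 fuel s : (size s <= 1)%N -> Mrec p fuel s = maxseq s.
Proof.
move=> s_le1.
have -> : Mrec p fuel s = head 0 s by case: fuel => //= ?; rewrite s_le1.
by case: s s_le1 => [|a []] //= _; rewrite /maxseq /= maxxx.
Qed.

Lemma Mrec_split fuel s : (1 < size s)%N ->
  Mrec p fuel.+1 s =
  malpha p (Mrec p fuel (take (size s)./2 s)) (Mrec p fuel (drop (size s)./2 s)).
Proof. by move=> s2; rewrite /= leqNgt s2. Qed.

(* Both inner maxima lie in [k e, 1 - k e], so the approximations u, v stay in
   the unit square where m_alpha is e-accurate. *)
Lemma malpha_step_err (k : R) u v M1 M2 :
  `|u - M1| <= k * e -> `|v - M2| <= k * e ->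
  k * e <= M1 <= 1 - k * e -> k * e <= M2 <= 1 - k * e ->
  `|malpha p u v - Num.max M1 M2| <= (k + 1) * e.
Proof.
move=> uM1 vM2 /andP[? ?] /andP[? ?].
have uv := ler_dist_max uM1 vM2.
have [u01 v01] : 0 <= u <= 1 /\ 0 <= v <= 1.
  move: uM1 vM2; rewrite !ler_norml => /andP[? ?] /andP[? ?].
  by split; apply/andP; split; lra.
move: uv (malpha_err u01 v01); rewrite !ler_norml => /andP[? ?] /andP[? ?].
by apply/andP; split; lra.
Qed.

Lemma malpha_err_ge0 : 0 <= e.
Proof.
have h01 : 0 <= (0 : R) <= 1 by rewrite lexx ler01.
exact: le_trans (normr_ge0 _) (malpha_err h01 h01).
Qed.

Lemma Mrec_err (d : nat) fuel s :
  (0 < size s)%N -> (size s <= 2 ^ d)%N -> (size s <= fuel.+1)%N ->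
  {in s, forall y, (d%:R - 1) * e <= y <= 1 - (d%:R - 1) * e} ->
  `|Mrec p fuel s - maxseq s| <= d%:R * e.
Proof.
have e0 := malpha_err_ge0.
elim: d fuel s => [|d IHd] fuel s s0 sd sfuel s_in;
  have [s_le1|s_gt1] := leqP (size s) 1;
  try by rewrite Mrec_size_le1 // subrr normr0 mulr_ge0.
case: fuel sfuel => [|fuel] sfuel; first lia.
rewrite Mrec_split // -[in maxseq s](cat_take_drop (size s)./2 s).
set h := (size s)./2; set sl := take h s; set sr := drop h s.
have [sz1 sz2] : size sl = h /\ size sr = (size s - h)%N.
  by rewrite size_take size_drop; split => //; rewrite ifT //; lia.
have [hl hr] : (0 < h <= 2 ^ d)%N /\ (0 < size s - h <= minn (2 ^ d) fuel.+1)%N.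
  by move: sd sfuel s_gt1; rewrite expnS /h -divn2; lia.
have s_in' : {in s, forall y, d%:R * e <= y <= 1 - d%:R * e}.
  by move=> y /s_in; rewrite -natr1 addrK.
have s_inW : {in s, forall y, (d%:R - 1) * e <= y <= 1 - (d%:R - 1) * e}.
  by move=> y /s_in'/andP[? ?]; apply/andP; split; nra.
have err1 : `|Mrec p fuel sl - maxseq sl| <= d%:R * e.
  by apply: IHd; rewrite ?sz1; try lia; move=> y /mem_take /s_inW.
have err2 : `|Mrec p fuel sr - maxseq sr| <= d%:R * e.
  by apply: IHd; rewrite ?sz2; try lia; move=> y /mem_drop /s_inW.
have [n1 n2] : sl != [::] /\ sr != [::] by rewrite -!size_eq0 sz1 sz2; split; lia.
rewrite maxseq_cat // -natr1; apply: malpha_step_err => //.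
  exact/s_in'/mem_take/maxseq_mem.
exact/s_in'/mem_drop/maxseq_mem.
Qed.
End TreeMax.

Section SupNorm.
Variables (R : realType) (n : nat).
Implicit Types (x y : 'cV[R]_n) (c : R).

Lemma supnorm_ge0 x : 0 <= supnorm x.
Proof. by apply: (big_ind (fun v => 0 <= v)) => // a b; rewrite le_max => ->. Qed.

Lemma supnorm_le x c : 0 <= c -> (forall i, `|x i 0| <= c) -> supnorm x <= c.
Proof.
move=> c0 xc; apply: (big_ind (fun v => v <= c)) => // a b.
by rewrite ge_max => ->.
Qed.

Lemma ler_supnorm x i : `|x i 0| <= supnorm x.
Proof. by rewrite /supnorm (bigD1 i) //= le_max lexx. Qed.

Lemma supnorm0 : supnorm (0 : 'cV[R]_n) = 0.
Proof.
by apply/eqP; rewrite eq_le supnorm_ge0 supnorm_le // => i; rewrite mxE normr0.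
Qed.

Lemma supnorm_coord_le x c i : supnorm x <= c -> `|x i 0| <= c.
Proof. exact: le_trans (ler_supnorm x i). Qed.

Lemma dist_coord_le_supnorm x y i : `|y i 0 - x i 0| <= supnorm (y - x).
Proof. by have := ler_supnorm (y - x) i; rewrite !mxE. Qed.

End SupNorm.

Lemma exp2N_le16 (R : realType) (a : nat) :
  (4 <= a)%N -> 0 < (2 ^- a : R) <= 16^-1.
Proof.
move=> a4; rewrite invr_gt0 exprn_gt0 //= lef_pV2 ?posrE ?exprn_gt0 //.
by rewrite (_ : 16 = 2 ^+ 4 :> R) ?ler_eXn2l ?ltr1n //; rewrite !exprS expr0; lra.
Qed.

Section MaxPoolApprox.
Variables (R : realType) (p : {poly R}) (a : nat) (B : R).
Hypothesis a4 : (4 <= a)%N.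
Hypothesis B0 : 0 < B.
Hypothesis malpha_err : forall x y : R, 0 <= x <= 1 -> 0 <= y <= 1 ->
  `|malpha p x y - Num.max x y| <= 2 ^- a.

(* With at most 100 < 2^7 inputs the tree has depth D <= 7, so the denominator
   of B' is at least 1/2 - 6/16 = 1/8. *)
Lemma Bprime_denom_ge (k : nat) : (k <= 100)%N ->
  8^-1 <= 2^-1 - ((up_log 2 k)%:R - 1) * (2 ^- a : R).
Proof.
move=> k100; have /andP[e0 e16] := exp2N_le16 R a4.
have : (up_log 2 k <= 7)%N by apply: up_log_min => //; apply: leq_trans k100 _.
by rewrite -(ler_nat R) => ?; nra.
Qed.

Lemma Mtilde_err s : (0 < size s)%N -> (size s <= 100)%N ->
  {in s, forall y, `|y| <= B} -> `|Mtilde p a B s - maxseq s| <= 56 * B * 2 ^- a.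
Proof.
move=> s0 s100 s_in; have /andP[e0 e16] := exp2N_le16 R a4.
set e := (2 ^- a : R) in e0 e16 *.
set D := up_log 2 (size s).
have D7 : (D%:R : R) <= 7 by rewrite ler_nat; apply: up_log_min => //; lia.
set q := 2^-1 - (D%:R - 1) * e.
have q8 : 8^-1 <= q := Bprime_denom_ge s100.
have q0 : 0 < q by apply: lt_le_trans q8; rewrite invr_gt0.
set B' := B / q.
have B'0 : 0 < B' by rewrite divr_gt0.
have B'8 : B' <= 8 * B.
  by rewrite ler_pdivrMr // mulrAC ler_peMl ?(ltW B0) //; lra.
set s' := [seq y / B' + 2^-1 | y <- s].
have s'_in : {in s', forall z, (D%:R - 1) * e <= z <= 1 - (D%:R - 1) * e}.
  move=> _ /mapP[y /s_in yB ->].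
  have -> : y / B' = y / B * q by rewrite /B' invf_div mulrA mulrAC.
  have : `|y / B| <= 1 by rewrite normrM normfV (gtr0_norm B0) ler_pdivrMr // mul1r.
  have -> : (D%:R - 1) * e = 2^-1 - q by rewrite /q; ring.
  by rewrite ler_norml => /andP[? ?]; apply/andP; split; nra.
have tree : `|Mtree p s' - maxseq s'| <= D%:R * e.
  by apply: (Mrec_err malpha_err); rewrite ?size_map ?up_logP.
have -> : Mtilde p a B s - maxseq s = B' * (Mtree p s' - maxseq s').
  rewrite /Mtilde /Bprime -/D -/e -/q -/B' -/s' maxseq_map_nondecr.
  - by field; rewrite gt_eqF.
  - by rewrite -size_eq0 -lt0n.
  - by move=> u v uv; rewrite lerD2r ler_pM2r ?invr_gt0.
rewrite normrM gtr0_norm //; apply: le_trans (ler_wpM2l (ltW B'0) tree) _.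
have De : D%:R * e <= 7 * e by rewrite ler_pM2r.
have := ler_wpM2r (ltW e0) B'8; have := ler_wpM2l (ltW B'0) De; lra.
Qed.

End MaxPoolApprox.

Section ReLUApprox.
Variables (R : realType) (p : {poly R}) (e : R).
Hypothesis malpha_err : forall a b : R, 0 <= a <= 1 -> 0 <= b <= 1 ->
  `|malpha p a b - Num.max a b| <= e.

(* r_alpha(t) = m_alpha(t, 0), and also r_alpha(t) = m_alpha(0, -t) + t. *)
Lemma ralpha_err t : `|t| <= 1 -> `|ralpha p t - Num.max t 0| <= e.
Proof.
rewrite ler_norml => /andP[t_ge t_le].
have [t0|t0] := leP 0 t.
  have := @malpha_err t 0; rewrite /malpha addr0 subr0 max_l //.
  by rewrite t0 t_le lexx ler01 => /(_ isT isT).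
have nt0 : 0 <= - t by rewrite oppr_ge0 ltW.
have := @malpha_err 0 (- t); rewrite /malpha add0r sub0r opprK (max_r nt0).
rewrite nt0 lexx ler01 lerNl t_ge => /(_ isT isT).
by rewrite /ralpha subr0; congr (`|_| <= _); field.
Qed.

Lemma rtilde_err B y : 0 < B -> `|y| <= B ->
  `|rtilde p B y - Num.max y 0| <= B * e.
Proof.
move=> B0 yB; have yBE : y = B * (y / B) by rewrite mulrC divfK ?gt_eqF.
have -> : Num.max y 0 = B * Num.max (y / B) 0.
  by rewrite maxr_pMr ?ltW // mulr0 -yBE.
rewrite /rtilde -mulrBr normrM gtr0_norm // ler_pM2l // ralpha_err //.
by rewrite normrM normfV (gtr0_norm B0) ler_pdivrMr // mul1r.
Qed.

End ReLUApprox.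

Lemma expR_dist_le (R : realType) (B a b : R) : a <= B -> b <= B ->
  `|expR a - expR b| <= expR B * `|a - b|.
Proof.
wlog ba : a b / b <= a.
  move=> h aB bB; have [ba|/ltW ab] := leP b a; first exact: h.
  by rewrite distrC (distrC a); exact: h.
move=> aB bB; rewrite !ger0_norm ?subr_ge0 ?ler_expR //.
have expR_ba : 1 + (b - a) <= expR (b - a) := expR_ge1Dx _.
have -> : expR b = expR a * expR (b - a) by rewrite -expRD addrC subrK.
apply: le_trans (_ : expR a * (a - b) <= _).
  by rewrite -[X in X - _]mulr1 -mulrBr ler_pM2l ?expR_gt0 //; lra.
by rewrite ler_wpM2r ?subr_ge0 ?ler_expR.
Qed.

Section Softmax.
Variables (R : realType) (n : nat) (B : R).
Implicit Types x y : 'cV[R]_n.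

Lemma sum_expR_ge x i : expR (x i 0) <= \sum_j expR (x j 0).
Proof.
by rewrite (bigD1 i) //= lerDl; apply: sumr_ge0 => j _; apply/ltW/expR_gt0.
Qed.

Lemma sum_expR_inv_le x (i : 'I_n) :
  supnorm x <= B -> (\sum_j expR (x j 0))^-1 <= expR B.
Proof.
move=> /(supnorm_coord_le i); rewrite ler_norml => /andP[Bx _].
have S_ge : expR (- B) <= \sum_j expR (x j 0).
  by apply: le_trans (sum_expR_ge x i); rewrite ler_expR.
rewrite -[expR B]invrK -expRN lef_pV2 ?posrE ?expR_gt0 //.
exact: lt_le_trans (expR_gt0 _) S_ge.
Qed.

Lemma sum_expR_dist x y : supnorm x <= B -> supnorm y <= B ->
  `|\sum_j expR (x j 0) - \sum_j expR (y j 0)|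
    <= n%:R * (expR B * supnorm (y - x)).
Proof.
move=> xB yB; rewrite -sumrB; apply: le_trans (ler_norm_sum _ _ _) _.
apply: le_trans (_ : \sum_(j < n) expR B * supnorm (y - x) <= _); last first.
  by rewrite sumr_const card_ord mulr_natl.
apply: ler_sum => j _; apply: le_trans (expR_dist_le (B := B) _ _) _.
- by have := supnorm_coord_le j xB; rewrite ler_norml => /andP[].
- by have := supnorm_coord_le j yB; rewrite ler_norml => /andP[].
by rewrite ler_wpM2l ?expR_ge0 // distrC dist_coord_le_supnorm.
Qed.

Lemma softmax_dist x y i : supnorm x <= B -> supnorm y <= B ->
  `|(softmax y - softmax x) i 0| <= expR B ^+ 2 * n.+1%:R * supnorm (y - x).
Proof.
move=> xB yB; rewrite !mxE.
set d := supnorm (y - x).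
set Sx := \sum_j expR (x j 0); set Sy := \sum_j expR (y j 0).
have Sx0 : 0 < Sx := lt_le_trans (expR_gt0 _) (sum_expR_ge x i).
have Sy0 : 0 < Sy := lt_le_trans (expR_gt0 _) (sum_expR_ge y i).
have Sx_inv : Sx^-1 <= expR B := sum_expR_inv_le i xB.
have dS := sum_expR_dist xB yB.
have dexp : `|expR (y i 0) - expR (x i 0)| <= expR B * d.
  apply: le_trans (expR_dist_le (B := B) _ _) _.
  - by have := supnorm_coord_le i yB; rewrite ler_norml => /andP[].
  - by have := supnorm_coord_le i xB; rewrite ler_norml => /andP[].
  by rewrite ler_wpM2l ?expR_ge0 ?dist_coord_le_supnorm.
have sy01 : 0 <= expR (y i 0) / Sy <= 1.
  by rewrite divr_ge0 ?expR_ge0 ?(ltW Sy0) //= ler_pdivrMr // mul1r sum_expR_ge.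
have -> : expR (y i 0) / Sy - expR (x i 0) / Sx =
    (expR (y i 0) - expR (x i 0)) / Sx + expR (y i 0) / Sy * ((Sx - Sy) / Sx).
  by field; rewrite !gt_eqF.
have /andP[sy0 sy1] := sy01; have iSx0 : 0 <= Sx^-1 by rewrite invr_ge0 ltW.
apply: le_trans (ler_normD _ _) _.
rewrite normrM (ger0_norm iSx0) normrM (ger0_norm sy0) normrM (ger0_norm iSx0).
have t1 : `|expR (y i 0) - expR (x i 0)| * Sx^-1 <= expR B * d * expR B.
  by rewrite ler_pM ?normr_ge0.
have t2 : `|Sx - Sy| * Sx^-1 <= n%:R * (expR B * d) * expR B.
  by rewrite ler_pM ?normr_ge0.
have t3 : expR (y i 0) / Sy * (`|Sx - Sy| * Sx^-1) <= `|Sx - Sy| * Sx^-1.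
  by rewrite ler_piMl ?mulr_ge0 ?normr_ge0.
have -> : expR B ^+ 2 * n.+1%:R * d =
    expR B * d * expR B + n%:R * (expR B * d) * expR B by rewrite -natr1; ring.
lra.
Qed.

End Softmax.

Lemma mulmx_coord_le (R : realType) m n (M : 'M[R]_(n, m)) (v : 'cV[R]_m) i :
  `|(M *m v) i 0| <= (\sum_j `|M i j|) * supnorm v.
Proof.
rewrite mxE mulr_suml; apply: le_trans (ler_norm_sum _ _ _) _.
by apply: ler_sum => j _; rewrite normrM ler_wpM2l ?ler_supnorm.
Qed.

Section ModelApprox.
Variables (R : realType) (p : nat -> {poly R}) (B : R).
Hypothesis malpha_err : forall alpha : nat, (4 <= alpha)%N -> forall a b : R,
  0 <= a <= 1 -> 0 <= b <= 1 ->
  `|malpha (p alpha) a b - Num.max a b| <= 2 ^- alpha.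
Hypothesis B0 : 0 < B.

Lemma block_err m n (A : block R m n) : exists c L : R, [/\ 0 <= c, 0 <= L &
  forall alpha : nat, (4 <= alpha)%N -> forall x y : 'cV[R]_m,
    supnorm x <= B -> supnorm y <= B -> forall i,
    `|(block_approx p alpha B A y - block_eval A x) i 0|
      <= c * 2 ^- alpha + L * supnorm (y - x)].
Proof.
case: A => [m0 n0 M b | n0 | m0 n0 k0 k0_le w | n0].
- exists 0, (\sum_i \sum_j `|M i j|); split => // [|alpha _ x y _ _ i].
    by apply: sumr_ge0 => i _; apply: sumr_ge0.
  rewrite /= mul0r add0r opprD addrACA subrr addr0 -mulmxBr.
  apply: le_trans (mulmx_coord_le M (y - x) i) _.
  rewrite ler_wpM2r ?supnorm_ge0 //.
  by rewrite (bigD1 i) //= lerDl; apply: sumr_ge0 => k _; apply: sumr_ge0.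
- exists B, 1; split => [|//|alpha a4 x y xB yB i]; first exact: ltW.
  rewrite /= !mxE mul1r; apply: le_trans (ler_distD (Num.max (y i 0) 0) _ _) _.
  apply: lerD.
    by apply: le_trans (rtilde_err (malpha_err a4) B0 (supnorm_coord_le i yB)) _.
  apply: ler_dist_max; first exact: dist_coord_le_supnorm.
  by rewrite subrr normr0 supnorm_ge0.
- exists (56 * B), 1; split => [|//|alpha a4 x y xB yB j].
    by rewrite mulr_ge0 ?ltW.
  have size_win z : size (window w z j) = (k0 ^ 2)%N.
    by rewrite size_map size_enum_ord.
  rewrite /= !mxE mul1r; apply: le_trans (ler_distD (maxseq (window w y j)) _ _) _.
  apply: lerD.
    apply: le_trans (Mtilde_err a4 B0 (malpha_err a4) _ _ _) _; rewrite ?size_win //.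
    - by rewrite expn_gt0; lia.
    - by rewrite -mulnn; nia.
    - by move=> _ /mapP[t _ ->]; apply: supnorm_coord_le.
  apply: maxseq_dist_map; first exact: supnorm_ge0.
  by move=> t _; apply: dist_coord_le_supnorm.
- exists 0, (expR B ^+ 2 * n0.+1%:R); split => // [|alpha _ x y xB yB i].
    by rewrite mulr_ge0 ?exprn_ge0 ?expR_ge0.
  by rewrite /= mul0r add0r; apply: softmax_dist.
Qed.

Lemma model_err m n (F : model R m n) : exists C : R, 0 <= C /\
  forall alpha : nat, (4 <= alpha)%N -> forall x : 'cV[R]_m,
    supnorm x <= B ->
    inner_bounded (@block_eval R) B F x ->
    inner_bounded (block_approx p alpha B) B F x ->
    supnorm (model_eval (block_approx p alpha B) F x -
             model_eval (@block_eval R) F x) <= C * 2 ^- alpha.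
Proof.
elim: F => [m0 n0 A | m0 k0 n0 A F [C [C0 IHF]]];
  have [c [L [c0 L0 errA]]] := block_err A.
  exists c; split => // alpha a4 x xB _ _.
  have /andP[/ltW e0 _] := exp2N_le16 R a4.
  apply: supnorm_le => [|i]; first exact: mulr_ge0.
  by have := errA alpha a4 x x xB xB i; rewrite subrr supnorm0 mulr0 addr0.
exists (c + L * C); split => [|alpha a4 x xB /= [exF_in exF_B] [apF_in apF_B]].
  by rewrite addr_ge0 ?mulr_ge0.
have /andP[/ltW e0 _] := exp2N_le16 R a4.
apply: supnorm_le => [|i]; first by rewrite mulr_ge0 ?addr_ge0 ?mulr_ge0.
apply: le_trans (errA alpha a4 _ _ exF_B apF_B i) _.
by rewrite mulrDl -mulrA lerD2l ler_wpM2l ?IHF.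
Qed.

End ModelApprox.

Theorem theorem4 (R : realType) (p : nat -> {poly R})
  (hp : forall alpha : nat, (4 <= alpha)%N -> forall a b : R,
      0 <= a <= 1 -> 0 <= b <= 1 ->
      `|malpha (p alpha) a b - Num.max a b| <= 2 ^- alpha)
  (B : R) (hB : 1 < B) (m n : nat) (F : model R m n) :
  exists C : R, forall alpha : nat, (4 <= alpha)%N -> forall x : 'cV[R]_m,
    supnorm x <= B ->
    inner_bounded (@block_eval R) B F x ->
    inner_bounded (block_approx p alpha B) B F x ->
    supnorm (model_eval (block_approx p alpha B) F x - model_eval (@block_eval R) F x)
      <= C * 2 ^- alpha.
Proof.
have [C [_ errF]] := model_err hp (lt_trans ltr01 hB) F.
by exists C.
Qed.
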